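(* Let $k \ge 1$ be an integer and let $G$ be a $k$-degenerate graph with maximum degree $\Delta$, where $k \le \Delta$. Then $\chi_s'(G) \le (4k-2)\Delta - 2k^2 + 1$.
   Context: All graphs are finite and simple. A graph is $k$-degenerate if every subgraph of it has a vertex of degree at most $k$. A strong edge coloring of $G$ is an assignment of colors to the edges of $G$ such that every path with three edges receives three distinct colors; equivalently, any two distinct edges that share an endpoint, or that are both incident with a common edge (i.e., an endpoint of one is adjacent to an endpoint of the other), receive different colors. The strong chromatic index $\chi_s'(G)$ is the minimum number of colors in a strong edge coloring of $G$. *)

From mathcomp Require Import all_boot.
Set Implicit Arguments. Unset Strict Implicit. Unset Printing Implicit Defensive.

Definition simple_graph (V : finType) (e : rel V) : Prop :=
  symmetric e /\ irreflexive e.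

Definition deg_in (V : finType) (S : {set V}) (f : rel V) (v : V) : nat :=
  #|[set u in S | f v u]|.

Definition deg (V : finType) (e : rel V) (v : V) : nat := #|[set u | e v u]|.

Definition max_deg (V : finType) (e : rel V) : nat := \max_(v : V) deg e v.

(* G is k-degenerate: every (nonempty) subgraph H = (S, f) of G, with S a vertex
   subset and f a symmetric sub-relation of e (edges of H have both ends in S),
   has a vertex of degree at most k in H. *)
Definition degenerate (V : finType) (e : rel V) (k : nat) : Prop :=
  forall (S : {set V}) (f : rel V),
    S != set0 ->
    symmetric f ->
    (forall x y, f x y -> e x y) ->
    exists2 v, v \in S & deg_in S f v <= k.

Definition is_edge (V : finType) (e : rel V) (E : {set V}) : bool :=
  [exists x, exists y, e x y && (E == [set x; y])].

Definition conflict (V : finType) (e : rel V) (E F : {set V}) : bool :=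
  [exists x in E, exists y in F, (x == y) || e x y].

Definition strong_edge_coloring (V : finType) (e : rel V) (N : nat)
    (c : {set V} -> 'I_N) : Prop :=
  forall E F, is_edge e E -> is_edge e F -> E != F -> conflict e E F ->
    c E != c F.

Definition strong_chi_le (V : finType) (e : rel V) (N : nat) : Prop :=
  exists c : {set V} -> 'I_N, strong_edge_coloring e c.

From mathcomp Require Import all_boot zify.
Set Implicit Arguments. Unset Strict Implicit. Unset Printing Implicit Defensive.

(* 1. A k-degenerate graph has a degeneracy ordering: an injective ranking r of
      the vertices in which every vertex has at most k neighbours of smaller
      rank ("back neighbours"); repeatedly remove a vertex of degree <= k and
      give it the largest remaining rank.
   2. Greedy colouring: if the items of a finite family are processed in the
      order of an injective key and each item conflicts with fewer than N
      earlier items, then N colours suffice.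
   3. Edges uv with r u < r v are ordered lexicographically by (r u, r v).  An
      earlier edge in conflict with uv contains a neighbour w of u or of v
      (w not in {u, v}) together with a partner z of w in the set [tail u w].
      Counting these partners with the degree bound D and the back-degree
      bound k (k - 1 when v or u is itself a back neighbour) gives at most
      (4k - 2)D - 2k^2 earlier conflicting edges. *)

Definition back (V : finType) (e : rel V) (r : V -> nat) (x : V) : {set V} :=
  [set z | e x z & r z < r x].

Lemma degeneracy_ordering_on (V : finType) (e : rel V) (k : nat) :
  symmetric e -> degenerate e k ->
  forall S : {set V}, exists r : V -> nat,
    [/\ {in S &, injective r}, {in S, forall v, r v < #|S|} &
        {in S, forall v, #|[set u in S | e v u & r u < r v]| <= k}].
Proof.
move=> esym dg S; move Hn: #|S| => n; elim: n S Hn => [|n IH] S Hn.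
  exists (fun _ => 0); move/eqP: Hn; rewrite cards_eq0 => /eqP ->.
  by split=> x; rewrite in_set0.
have S0 : S != set0 by rewrite -card_gt0 Hn.
have [v vS dv] := dg S e S0 esym (fun x y h => h).
have Hn' : #|S :\ v| = n by move: (cardsD1 v S); rewrite vS Hn; case.
have [r' [r'inj r'lt r'back]] := IH _ Hn'.
have inS' x : x \in S -> x != v -> x \in S :\ v by rewrite in_setD1 => -> ->.
exists (fun x => if x == v then n else r' x); split.
- move=> x y xS yS /=.
  case: (eqVneq x v) => [->|xv]; case: (eqVneq y v) => [->|yv] //.
  + by move=> h; move: (r'lt _ (inS' _ yS yv)); rewrite -h ltnn.
  + by move=> h; move: (r'lt _ (inS' _ xS xv)); rewrite h ltnn.
  + by apply: r'inj; apply: inS'.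
- move=> x xS /=; case: (eqVneq x v) => [//|xv].
  by rewrite ltnS ltnW // r'lt // inS'.
- move=> x xS /=; case: (eqVneq x v) => [->|xv].
    apply: leq_trans dv; apply: subset_leq_card.
    by apply/subsetP=> u; rewrite !inE => /andP[-> /andP[->]].
  have xS' := inS' _ xS xv.
  apply: leq_trans (r'back _ xS'); apply: subset_leq_card.
  apply/subsetP=> u; rewrite !inE => /andP[uS /andP[exu]].
  case: (eqVneq u v) => [->|uv]; last by rewrite uS exu.
  by move=> h; move: (r'lt _ xS'); rewrite ltnNge ltnW.
Qed.

Lemma degeneracy_ordering (V : finType) (e : rel V) (k : nat) :
  symmetric e -> degenerate e k ->
  exists r : V -> nat, [/\ injective r, forall x, r x < #|V| &
                          forall x, #|back e r x| <= k].
Proof.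
move=> esym dg; have [r [rinj rlt rback]] := degeneracy_ordering_on esym dg setT.
exists r; split=> [x y rxy | x | x]; first exact: rinj.
- by rewrite -cardsT rlt.
- apply: leq_trans (rback x _) => //; apply: subset_leq_card.
  by apply/subsetP=> z; rewrite !inE.
Qed.

Definition earlier (T : finType) (P : pred T) (conf : rel T) (key : T -> nat)
    (E : T) : {set T} :=
  [set F | P F && (F != E) && conf E F && (key F < key E)].

(* The
   induction removes the item of largest key from a finite subfamily. *)
Lemma greedy_colouring (T : finType) (P : pred T) (conf : rel T)
    (key : T -> nat) (N : nat) :
  0 < N -> symmetric conf -> {in P &, injective key} ->
  (forall E, P E -> #|earlier P conf key E| < N) ->
  exists c : T -> 'I_N, forall E F, P E -> P F -> E != F -> conf E F -> c E != c F.
Proof.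
move=> N0 csym kinj few.
suff colour_sub (A : {set T}) : A \subset [set x | P x] -> exists c : T -> 'I_N,
    forall E F, E \in A -> F \in A -> E != F -> conf E F -> c E != c F.
  have [c hc] := colour_sub _ (subxx [set x | P x]).
  by exists c => E F PE PF; apply: hc; rewrite inE.
move Hn: #|A| => n; elim: n A Hn => [|n IH] A Hn AP.
  exists (fun _ => Ordinal N0); move/eqP: Hn; rewrite cards_eq0 => /eqP ->.
  by move=> E F; rewrite in_set0.
have [E0 E0A] : {E0 | E0 \in A} by apply/sigW/set0Pn; rewrite -card_gt0 Hn.
have AP' X : X \in A -> P X by move=> XA; have := subsetP AP X XA; rewrite inE.
pose E := [arg max_(X > E0 in A) key X].
have [EA Emax] : E \in A /\ forall X, X \in A -> key X <= key E.
  by rewrite /E; case: arg_maxnP.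
have Hn' : #|A :\ E| = n by move: (cardsD1 E A); rewrite EA Hn; case.
have [c' hc'] := IH _ Hn' (subset_trans (subD1set A E) AP).
pose used := [set c' F | F in [set F in A :\ E | conf E F]].
have used_lt : #|used| < N.
  apply: leq_ltn_trans (leq_imset_card _ _) (leq_ltn_trans _ (few E (AP' E EA))).
  apply: subset_leq_card; apply/subsetP=> F; rewrite !inE.
  move=> /andP[/andP[FE FA] cEF]; rewrite FE cEF AP' //= ltn_neqAle Emax // andbT.
  by apply: contra FE => /eqP/kinj-> //; rewrite unfold_in AP'.
have [col col_free] : exists col, col \notin used.
  apply/existsP; rewrite -negb_forall; apply/negP => /forallP all_used.
  have : #|'I_N| <= #|used| by apply/subset_leq_card/subsetP=> x _; exact: all_used.
  by rewrite card_ord leqNgt used_lt.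
exists (fun X => if X == E then col else c' X) => X Y XA YA XY cXY.
case: (eqVneq X E) => [XE|XE]; case: (eqVneq Y E) => [YE|YE].
- by move: XY; rewrite XE YE eqxx.
- apply: contra col_free => /eqP->; apply/imsetP; exists Y => //.
  by rewrite !inE YE YA -XE.
- apply: contra col_free => /eqP<-; apply/imsetP; exists X => //.
  by rewrite !inE XE XA -YE csym.
- by apply: hc' => //; rewrite in_setD1 ?XE ?YE.
Qed.

Lemma card_bigcup_le (I T : finType) (A : {set I}) (F : I -> {set T}) :
  #|\bigcup_(i in A) F i| <= \sum_(i in A) #|F i|.
Proof.
apply: (big_rec2 (fun (X : {set T}) m => #|X| <= m)); first by rewrite cards0.
by move=> i X m _ IH; apply: leq_trans (leq_card_setU _ _) _; rewrite leq_add2l.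
Qed.

Lemma sum_split_le (T : finType) (A B : {set T}) (f : T -> nat) (a b : nat) :
  {in A :&: B, forall x, f x <= a} -> {in A :\: B, forall x, f x <= b} ->
  \sum_(x in A) f x <= #|A :&: B| * a + #|A :\: B| * b.
Proof.
move=> fa fb; rewrite (big_setID B) -!sum_nat_const.
by apply: leq_add; apply: leq_sum.
Qed.

(* The final optimisation: p1 <= k neighbours of u and p2 <= k - 1 neighbours
   of v contribute D partners each, the remaining q1 resp. q2 neighbours
   contribute k resp. k - 1; the extreme case gives exactly the bound. *)
Lemma conflict_count_arith (k D p1 q1 p2 q2 : nat) :
  1 <= k -> k <= D -> p1 <= k -> p1 + q1 + 1 <= D ->
  p2 + 1 <= k -> p2 + q2 + 1 <= D ->
  p1 * D + q1 * k + (p2 * D + q2 * (k - 1)) <= (4 * k - 2) * D - 2 * k ^ 2.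
Proof. by move=> *; rewrite expnS expn1; nia. Qed.

Lemma lex_lt (n x1 y1 x2 y2 : nat) : y1 < n -> y2 < n ->
  x1 * n + y1 < x2 * n + y2 -> x1 < x2 \/ (x1 = x2 /\ y1 < y2).
Proof. by move=> *; nia. Qed.

Lemma lex_eq (n x1 y1 x2 y2 : nat) : y1 < n -> y2 < n ->
  x1 * n + y1 = x2 * n + y2 -> x1 = x2 /\ y1 = y2.
Proof.
move=> y1n y2n eq12; have n0 : 0 < n by apply: leq_ltn_trans y1n.
split; [move: (congr1 (divn^~ n) eq12) | move: (congr1 (modn^~ n) eq12)].
- by rewrite !divnMDl // !divn_small // !addn0.
- by rewrite !modnMDl !modn_small.
Qed.

Lemma conflict_sym (V : finType) (e : rel V) : symmetric e -> symmetric (conflict e).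
Proof.
move=> esym E F; apply/exists_inP/exists_inP => -[x xE /exists_inP[y yF xy]];
  by exists y => //; apply/exists_inP; exists x; rewrite // eq_sym esym.
Qed.

Section EdgeOrder.

Variables (V : finType) (e : rel V) (r : V -> nat) (n : nat).
Hypotheses (esym : symmetric e) (eirr : irreflexive e) (rinj : injective r)
           (r_lt : forall x, r x < n).

Lemma rank_neq (x y : V) : r x < r y -> x != y.
Proof. by apply: contraTneq => ->; rewrite ltnn. Qed.

Lemma adj_rank_neq (x y : V) : e x y -> r x != r y.
Proof. by apply: contraTneq => /rinj->; rewrite eirr. Qed.

(* The key of an edge {a, b} with r a < r b is r a * n + r b: edges are ordered
   lexicographically by (lower rank, upper rank). *)
Definition ekey (E : {set V}) : nat :=
  (\sum_(z in E) r z - \max_(z in E) r z) * n + \max_(z in E) r z.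

Lemma ekey_pair (a b : V) : r a < r b -> ekey [set a; b] = r a * n + r b.
Proof.
move=> ab; have anb : a \notin [set b] by rewrite inE rank_neq.
rewrite /ekey big_setU1 //= big_setU1 //= !big_set1.
by congr (_ * _ + _); lia.
Qed.

Lemma edge_oriented (E : {set V}) :
  is_edge e E -> exists u v, [/\ e u v, r u < r v & E = [set u; v]].
Proof.
move=> /existsP[x /existsP[y /andP[exy /eqP ->]]].
case: (ltngtP (r x) (r y)) => [xy|yx|/eqP]; first by exists x, y.
- by exists y, x; rewrite esym setUC.
- by rewrite (negbTE (adj_rank_neq exy)).
Qed.

Lemma ekey_inj : {in is_edge e &, injective ekey}.
Proof.
move=> E F; rewrite !unfold_in => /edge_oriented[a [b [_ ab ->]]].
move=> /edge_oriented[u [v [_ uv ->]]]; rewrite !ekey_pair // => keq.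
by have [/rinj-> /rinj->] := lex_eq (r_lt b) (r_lt v) keq.
Qed.

(* For an edge with lower end u and a vertex w, the partners z of w such that
   the edge wz may precede an edge with lower end u. *)
Definition tail (u w : V) : {set V} := [set z | e w z & (r w < r u) || (r z <= r u)].

Definition star (u w : V) : {set {set V}} := [set [set w; z] | z in tail u w].

(* Candidate earlier conflicting edges of uv: stars at the neighbours of u and of v. *)
Definition cover (u v : V) : {set {set V}} :=
  (\bigcup_(w in [set w | e u w] :\ v) star u w) :|:
  (\bigcup_(w in [set w | e v w] :\ u) star u w).

Lemma star_in_cover (u v x w z : V) :
  x \in [set u; v] -> e x w -> w \notin [set u; v] -> z \in tail u w ->
  [set w; z] \in cover u v.
Proof.
move=> /set2P xE exw wout zT; rewrite /cover.
have /andP[wu wv] : (w != u) && (w != v) by move: wout; rewrite !inE negb_or.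
by case: xE exw => -> exw; apply/setUP; [left|right]; apply/bigcupP; exists w;
  rewrite ?inE ?exw ?wu ?wv //; apply/imsetP; exists z.
Qed.

Lemma earlier_sub_cover (u v : V) : e u v -> r u < r v ->
  earlier (is_edge e) (conflict e) ekey [set u; v] \subset cover u v.
Proof.
move=> euv uv; apply/subsetP => F; rewrite inE => /andP[/andP[/andP[eF FE] cF]].
have [a [b [eab ab EF]]] := edge_oriented eF; subst F.
rewrite !ekey_pair // => /(lex_lt (r_lt b) (r_lt v)) [au|[/rinj au _]]; last first.
  (* F = {u, b}: it lies in the star of the neighbour b of u. *)
  subst a; rewrite setUC; apply: (@star_in_cover _ _ u) => //.
  - by rewrite !inE eqxx.
  - by rewrite !inE negb_or eq_sym rank_neq //=; apply: contraNneq FE => ->.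
  - by rewrite inE esym eab leqnn orbT.
have aout : a \notin [set u; v].
  by rewrite !inE negb_or !rank_neq // (ltn_trans au uv).
case: (boolP [exists x in [set u; v], e x a]) => [/exists_inP[x xE exa]|a_far].
  (* a is adjacent to u or v, and b is a partner of a. *)
  by apply: (star_in_cover xE exa aout); rewrite inE eab au.
(* Otherwise the conflict is witnessed by b, and a is a partner of b. *)
case/exists_inP: cF => x xE /exists_inP[y yF xy].
have no_xa x' : x' \in [set u; v] -> e x' a = false.
  by move=> x'E; apply: contraNF a_far => x'a; apply/exists_inP; exists x'.
rewrite setUC; case/set2P: yF => ?; subst y.
  by move: xy; rewrite no_xa // orbF => /eqP xa; move: aout; rewrite -xa xE.
have bout : b \notin [set u; v].
  by apply: contraT; rewrite negbK => /no_xa; rewrite esym eab.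
have exb : e x b by move: xy; case: eqP bout => // <-; rewrite xE.
by apply: (star_in_cover xE exb bout); rewrite inE esym eab (ltnW au) orbT.
Qed.

Lemma card_tail_deg (u w : V) : #|tail u w| <= deg e w.
Proof. by apply/subset_leq_card/subsetP => z; rewrite !inE => /andP[]. Qed.

Lemma tail_sub_back (u w : V) : r u < r w -> tail u w \subset back e r w.
Proof.
move=> uw; apply/subsetP => z; rewrite !inE ltnNge (ltnW uw) /=.
by move=> /andP[-> zu]; exact: leq_ltn_trans zu uw.
Qed.

Lemma tail_proper_back (u v w : V) : r u < r v -> r v < r w -> e w v ->
  tail u w \proper back e r w.
Proof.
move=> uv vw ewv; rewrite properE tail_sub_back ?(ltn_trans uv) //=.
apply/subsetPn; exists v; first by rewrite !inE ewv vw.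
by rewrite !inE ewv ltnNge ltnW ?(ltn_trans uv) //= -ltnNge.
Qed.

Variables (k D : nat).
Hypotheses (back_le : forall x, #|back e r x| <= k) (deg_le : forall x, deg e x <= D).

Lemma card_nbr_minus (x y : V) : e x y -> #|[set w | e x w] :\ y| + 1 <= D.
Proof.
move=> exy; apply: leq_trans (deg_le x).
by rewrite /deg (cardsD1 y [set w | e x w]) inE exy addnC.
Qed.

(* Neighbours w of u (w <> v) contribute D partners if below u (at most k such
   w, all back neighbours of u) and k partners otherwise. *)
Lemma sum_tail_lower (u v : V) : e u v ->
  exists p q, [/\ p <= k, p + q + 1 <= D &
    \sum_(w in [set w | e u w] :\ v) #|tail u w| <= p * D + q * k].
Proof.
move=> euv; set A := _ :\ v; set B := [set w | r w < r u].
exists #|A :&: B|, #|A :\: B|; split.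
- apply: leq_trans (back_le u); apply/subset_leq_card/subsetP => w.
  by rewrite !inE => /andP[/andP[_ ->] ->].
- by rewrite cardsID card_nbr_minus.
- apply: sum_split_le => w; rewrite !inE.
  + by move=> _; apply: leq_trans (card_tail_deg u w) (deg_le w).
  + move=> /andP[wu /andP[_ euw]]; apply: leq_trans (back_le w).
    apply/subset_leq_card/tail_sub_back.
    by rewrite ltn_neqAle (adj_rank_neq euw) leqNgt wu.
Qed.

(* Neighbours w of v (w <> u) contribute D partners if below v (at most k - 1
   such w, since u is also a back neighbour of v) and k - 1 partners otherwise,
   since v is then a back neighbour of w that is not a partner. *)
Lemma sum_tail_upper (u v : V) : e u v -> r u < r v ->
  exists p q, [/\ p + 1 <= k, p + q + 1 <= D &
    \sum_(w in [set w | e v w] :\ u) #|tail u w| <= p * D + q * (k - 1)].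
Proof.
move=> euv uv; have evu : e v u by rewrite esym.
set A := _ :\ u; set B := [set w | r w < r v].
exists #|A :&: B|, #|A :\: B|; split.
- have uA : u \notin A :&: B by rewrite !inE eqxx.
  rewrite addnC -[1]/(nat_of_bool true) -uA -cardsU1; apply: leq_trans (back_le v).
  apply/subset_leq_card/subsetP => w; rewrite !inE.
  by case/orP => [/eqP-> | /andP[/andP[_ ->] ->]]; rewrite ?evu.
- by rewrite cardsID card_nbr_minus.
- apply: sum_split_le => w; rewrite !inE.
  + by move=> _; apply: leq_trans (card_tail_deg u w) (deg_le w).
  + move=> /andP[wv /andP[_ evw]].
    have vw : r v < r w by rewrite ltn_neqAle (adj_rank_neq evw) leqNgt wv.
    have := proper_card (tail_proper_back uv vw (etrans (esym w v) evw)).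
    by have := back_le w; lia.
Qed.

Lemma card_earlier (u v : V) : 1 <= k -> k <= D -> e u v -> r u < r v ->
  #|earlier (is_edge e) (conflict e) ekey [set u; v]| <= (4 * k - 2) * D - 2 * k ^ 2.
Proof.
move=> k1 kD euv uv.
have [p1 [q1 [p1k pq1 sum1]]] := sum_tail_lower euv.
have [p2 [q2 [p2k pq2 sum2]]] := sum_tail_upper euv uv.
apply: leq_trans (subset_leq_card (earlier_sub_cover euv uv)) _.
apply: leq_trans (leq_card_setU _ _) _.
apply: leq_trans (conflict_count_arith k1 kD p1k pq1 p2k pq2).
by apply: leq_add; apply: leq_trans (card_bigcup_le _ _) _;
  [apply: leq_trans _ sum1 | apply: leq_trans _ sum2];
  apply: leq_sum => w _; apply: leq_imset_card.
Qed.

Lemma strong_colouring_of_ordering : 1 <= k -> k <= D ->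
  strong_chi_le e ((4 * k - 2) * D - 2 * k ^ 2 + 1).
Proof.
move=> k1 kD; apply: greedy_colouring; rewrite ?addn1 //.
- exact: conflict_sym.
- exact: ekey_inj.
- move=> E /edge_oriented[u [v [euv uv ->]]].
  by rewrite ltnS card_earlier.
Qed.

End EdgeOrder.

Theorem theorem1 (V : finType) (e : rel V) (k : nat) :
  simple_graph e ->
  1 <= k ->
  degenerate e k ->
  k <= max_deg e ->
  strong_chi_le e ((4 * k - 2) * max_deg e - 2 * k ^ 2 + 1).
Proof.
move=> [esym eirr] k1 dg kD.
have [r [rinj r_lt r_back]] := degeneracy_ordering esym dg.
apply: (strong_colouring_of_ordering esym eirr rinj r_lt r_back) => //.
by move=> x; apply: leq_bigmax.
Qed.
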